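(* For $x,y\ge 1$ with $x\ne y$ and $n>\max(x,y)$, the $(x,y)$ edge-addition process on $n$ vertices does not necessarily result in an $(x,y)$ task-dependency graph; that is, with positive probability its result is not an $(x,y)$ task-dependency graph.
   Context: A task-dependency graph is a finite directed acyclic graph (no loops, no multiple edges). A vertex is initial if it has in-degree $0$ and terminal if it has out-degree $0$ (an isolated vertex is both). An $(x,y)$ task-dependency graph has exactly $x$ initial and exactly $y$ terminal vertices. The $(x,y)$ edge-addition process on $n$ vertices: start with the empty graph on $\{1,\dots,n\}$ and repeatedly add, uniformly at random, an edge $(a,b)$ with $a<b$ not yet present; if an addition would cause fewer than $x$ initial vertices or fewer than $y$ terminal vertices, it is cancelled. The process halts if the graph after some edge addition is an $(x,y)$ task-dependency graph, or if no more edges can be added; the result is the final graph. *)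

From mathcomp Require Import all_boot all_order all_algebra.
Set Implicit Arguments. Unset Strict Implicit. Unset Printing Implicit Defensive.
Import GRing.Theory Num.Theory.

(* A graph on the vertex set 'I_n (= {1,..,n} shifted to {0,..,n-1}) is given by
   its set of directed edges; the edge-addition process only ever adds edges
   (a,b) with a < b, so every graph it produces is a DAG without loops or
   multiple edges. *)
Definition graph (n : nat) := {set 'I_n * 'I_n}.

Definition initials n (E : graph n) : {set 'I_n} :=
  [set v : 'I_n | [forall u : 'I_n, (u, v) \notin E]].

Definition terminals n (E : graph n) : {set 'I_n} :=
  [set v : 'I_n | [forall w : 'I_n, (v, w) \notin E]].

Definition is_tdg (x y n : nat) (E : graph n) : bool :=
  (#|initials E| == x) && (#|terminals E| == y).

(* edges (a,b), a<b, not yet present, whose addition is NOT cancelled *)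
Definition addable (x y n : nat) (E : graph n) : {set 'I_n * 'I_n} :=
  [set e : 'I_n * 'I_n | [&& (e.1 < e.2)%N, e \notin E,
                             (x <= #|initials (e |: E)|)%N &
                             (y <= #|terminals (e |: E)|)%N]].

(* Probability that the (x,y) edge-addition process, started from the current
   graph E (reached after some addition) with [fuel] steps of budget, ends in a
   graph that is NOT an (x,y) task-dependency graph.
   A uniformly chosen non-present edge that gets cancelled leaves the state
   unchanged; hence the next successful addition is uniform among the
   [addable] edges, and the process halts exactly when [addable] is empty
   (no more edges can be added) or right after an addition producing an
   (x,y) task-dependency graph. *)
Fixpoint prob_bad (x y n : nat) (fuel : nat) (E : graph n) : rat :=
  let A := addable x y E in
  match fuel with
  | 0 => if is_tdg x y E then 0 else 1
  | k.+1 =>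
      if A == set0 then (if is_tdg x y E then 0 else 1)
      else \sum_(e in A)
             (#|A|%:R)^-1 * (if is_tdg x y (e |: E) then 0
                             else prob_bad x y k (e |: E))
  end%R.

(* The process on n vertices starts from the empty graph; at most n*n edges
   can ever be added, so the fuel n*n is never exhausted prematurely. *)
Definition process_bad_prob (x y n : nat) : rat :=
  prob_bad x y (n * n) (set0 : graph n).

From mathcomp Require Import all_boot all_order all_algebra.
From mathcomp Require Import zify.
Import GRing.Theory Num.Theory.

Set Implicit Arguments.
Unset Strict Implicit.

(* The process reaches, with positive probability, every "stuck" graph F: a
   graph of forward edges with at least x initial and at least y terminal
   vertices, not an (x,y) task-dependency graph, to which no edge can be added.
   Indeed, adding the edges of F one by one is a possible run: initial and
   terminal vertices only disappear as edges are added, so every subgraph of F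
   has at least as many of each as F, hence no addition is cancelled and no
   intermediate graph is an (x,y) task-dependency graph.
   For y < x a stuck graph is the complete forward graph on the first n-x+1
   vertices: it has x initial and x terminal vertices, and any new edge ends in
   an initial vertex. For x < y take the complete forward graph on the last
   n-y+1 vertices, where any new edge starts at a terminal vertex. *)

Section InitialsTerminals.

Variable n : nat.
Implicit Types (E G : graph n) (e : 'I_n * 'I_n).

Lemma initialsS E G : E \subset G -> initials G \subset initials E.
Proof.
move=> sEG; apply/subsetP => v; rewrite !inE => /forallP noin.
by apply/forallP => u; apply: contra (noin u); apply: (subsetP sEG).
Qed.

Lemma terminalsS E G : E \subset G -> terminals G \subset terminals E.
Proof.
move=> sEG; apply/subsetP => v; rewrite !inE => /forallP noout.
by apply/forallP => w; apply: contra (noout w); apply: (subsetP sEG).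
Qed.

Lemma initialsU1 e E : initials (e |: E) = initials E :\ e.2.
Proof.
apply/setP => v; rewrite !inE; apply/forallP/andP => [noin | [ne2 /forallP noin] u].
- split; last by apply/forallP => u; have := noin u; rewrite inE negb_or => /andP[].
  by apply: contraL (noin e.1) => /eqP ->; rewrite -surjective_pairing setU11.
- rewrite inE negb_or noin andbT inE; apply: contraNneq ne2 => <-; exact: eqxx.
Qed.

Lemma terminalsU1 e E : terminals (e |: E) = terminals E :\ e.1.
Proof.
apply/setP => v; rewrite !inE; apply/forallP/andP => [noout | [ne1 /forallP noout] w].
- split; last by apply/forallP => w; have := noout w; rewrite inE negb_or => /andP[].
  by apply: contraL (noout e.2) => /eqP ->; rewrite -surjective_pairing setU11.
- rewrite inE negb_or noout andbT inE; apply: contraNneq ne1 => <-; exact: eqxx.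
Qed.

Lemma addable_eq0 x y (F : graph n) :
  (forall e, (e.1 < e.2)%N -> e \notin F ->
     (e.2 \in initials F) && (#|initials F| <= x)%N
     || (e.1 \in terminals F) && (#|terminals F| <= y)%N) ->
  addable x y F = set0.
Proof.
move=> cancelled; apply/setP => e; rewrite !inE initialsU1 terminalsU1.
apply/and4P => -[lt_e eF le_x le_y].
case/orP: (cancelled e lt_e eF) => /andP[mem le].
- by move: le; rewrite (cardsD1 e.2) mem add1n => /leq_trans/(_ le_x); rewrite ltnn.
- by move: le; rewrite (cardsD1 e.1) mem add1n => /leq_trans/(_ le_y); rewrite ltnn.
Qed.

End InitialsTerminals.

Lemma prob_bad_ge0 x y n k (E : graph n) : (0 <= prob_bad x y k E)%R.
Proof.
elim: k E => [|k IHk] E /=; first by case: is_tdg.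
case: ifP => _; first by case: is_tdg.
apply: sumr_ge0 => e _; rewrite mulr_ge0 ?invr_ge0 ?ler0n //.
by case: is_tdg.
Qed.

Section StuckGraph.

Variables (x y n : nat) (F : graph n).
Hypothesis F_forward : forall e, e \in F -> (e.1 < e.2)%N.
Hypothesis initials_F : (x <= #|initials F|)%N.
Hypothesis terminals_F : (y <= #|terminals F|)%N.
Hypothesis F_not_tdg : ~~ is_tdg x y F.
Hypothesis F_stuck : addable x y F = set0.

Lemma not_tdg_sub (G : graph n) : G \subset F -> is_tdg x y G = false.
Proof.
move=> sGF; apply: negbTE; move: F_not_tdg; rewrite /is_tdg.
have leI := subset_leq_card (initialsS sGF).
have leT := subset_leq_card (terminalsS sGF).
by apply: contra => /andP[/eqP iG /eqP tG]; apply/andP; split; apply/eqP; lia.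
Qed.

Lemma addable_sub (E : graph n) e :
  E \subset F -> e \in F :\: E -> e \in addable x y E.
Proof.
move=> sEF /setDP[eF eE]; have sEeF : e |: E \subset F by rewrite subUset sub1set eF.
rewrite inE F_forward // eE.
rewrite (leq_trans initials_F (subset_leq_card (initialsS sEeF))).
by rewrite (leq_trans terminals_F (subset_leq_card (terminalsS sEeF))).
Qed.

Lemma prob_bad_sub_gt0 k (E : graph n) :
  E \subset F -> (#|F :\: E| <= k)%N -> (0 < prob_bad x y k E)%R.
Proof.
elim: k E => [|k IHk] E sEF.
  rewrite leqn0 cards_eq0 setD_eq0 => sFE.
  have -> : E = F by apply/eqP; rewrite eqEsubset sEF.
  by rewrite /= not_tdg_sub ?subxx.
have [-> _ | neEF le_k] := eqVneq E F; first by rewrite /= F_stuck eqxx not_tdg_sub ?subxx.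
have [e eFE] : exists e, e \in F :\: E.
  by apply/set0Pn; rewrite setD_eq0; apply: contra neEF => sFE; rewrite eqEsubset sEF.
have sEeF : e |: E \subset F by rewrite subUset sub1set sEF andbT; case/setDP: eFE.
have eA := addable_sub sEF eFE.
have nA : addable x y E != set0 by apply/set0Pn; exists e.
rewrite /= (negbTE nA) (bigD1 e) //= not_tdg_sub //.
apply: ltr_wpDr.
  apply: sumr_ge0 => e' _; rewrite mulr_ge0 ?invr_ge0 ?ler0n //.
  by case: is_tdg; rewrite // prob_bad_ge0.
rewrite mulr_gt0 ?invr_gt0 ?ltr0n ?card_gt0 //.
apply: IHk => //; move: le_k.
by rewrite (cardsD1 e) eFE setDDl setUC add1n ltnS.
Qed.

Lemma process_bad_prob_gt0 : (0 < process_bad_prob x y n)%R.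
Proof.
apply: prob_bad_sub_gt0; first exact: sub0set.
by rewrite setD0 (leq_trans (max_card _)) // card_prod card_ord.
Qed.

End StuckGraph.

Lemma card_ord_outside n a b : (a <= b)%N ->
  #|[set v : 'I_n | (v < a) || (b <= v)]| = (minn a n + (n - b))%N.
Proof.
move=> le_ab.
have -> : #|[set v : 'I_n | (v < a) || (b <= v)]|
          = count (fun v => (v < a) || (b <= v))%N (iota 0 n).
  rewrite cardE -val_enum_ord count_map size_filter count_filter.
  by apply: eq_count => v; rewrite /= inE andbT.
elim: n => [|n IHn]; first by rewrite minn0.
rewrite -addn1 iotaD count_cat IHn /= add0n addn0.
by case: ltnP; case: leqP; lia.
Qed.

Section CompleteForwardGraph.

Variable n : nat.

Definition clique lo hi : graph n :=
  [set e : 'I_n * 'I_n | (lo <= e.1)%N && (e.1 < e.2 <= hi)%N].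

Lemma clique_forward lo hi (e : 'I_n * 'I_n) : e \in clique lo hi -> (e.1 < e.2)%N.
Proof. by rewrite inE => /and3P[]. Qed.

Lemma notin_clique lo hi (e : 'I_n * 'I_n) :
  (e.1 < e.2)%N -> e \notin clique lo hi -> (e.1 < lo)%N || (hi < e.2)%N.
Proof. by rewrite inE; lia. Qed.

Variables lo hi : nat.
Hypothesis lt_hi_n : (hi < n)%N.

Lemma initials_clique : initials (clique lo hi) = [set v : 'I_n | (v < lo.+1) || (hi < v)]%N.
Proof.
apply/setP => v; rewrite !inE; apply/forallP/idP => [noin | outside u].
  case: (ltnP lo n) => [lt_lo_n | ?]; last by lia.
  by have := noin (Ordinal lt_lo_n); rewrite inE /=; lia.
by rewrite inE /=; lia.
Qed.

Lemma terminals_clique : terminals (clique lo hi) = [set v : 'I_n | (v < lo) || (hi <= v)]%N.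
Proof.
apply/setP => v; rewrite !inE; apply/forallP/idP => [noout | outside w].
  by have := noout (Ordinal lt_hi_n); rewrite inE /=; lia.
by rewrite inE /=; lia.
Qed.

Hypothesis le_lo_hi : (lo <= hi)%N.

Lemma card_initials_clique : #|initials (clique lo hi)| = (lo.+1 + (n - hi.+1))%N.
Proof. by rewrite initials_clique card_ord_outside //; lia. Qed.

Lemma card_terminals_clique : #|terminals (clique lo hi)| = (lo + (n - hi))%N.
Proof. by rewrite terminals_clique card_ord_outside //; lia. Qed.

End CompleteForwardGraph.

Lemma process_bad_prob_gt0_y_lt_x x y n :
  (y < x)%N -> (x < n)%N -> (0 < process_bad_prob x y n)%R.
Proof.
move=> lt_yx lt_xn.
have lt_hi_n : (n - x < n)%N by lia.
have cI := card_initials_clique lt_hi_n (leq0n _).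
have cT := card_terminals_clique lt_hi_n (leq0n _).
apply: (@process_bad_prob_gt0 _ _ _ (clique n 0 (n - x))).
- exact: clique_forward.
- by rewrite cI; lia.
- by rewrite cT; lia.
- by rewrite /is_tdg cT; apply/nandP; right; lia.
apply: addable_eq0 => e lt_e /(notin_clique lt_e); rewrite ltn0 /= => lt_hi_e2.
by apply/orP; left; rewrite cI initials_clique // inE lt_hi_e2 orbT; lia.
Qed.

Lemma process_bad_prob_gt0_x_lt_y x y n :
  (x < y)%N -> (y < n)%N -> (0 < process_bad_prob x y n)%R.
Proof.
move=> lt_xy lt_yn.
have le_lo_hi : (y.-1 <= n.-1)%N by lia.
have lt_hi_n : (n.-1 < n)%N by lia.
have cI := card_initials_clique lt_hi_n le_lo_hi.
have cT := card_terminals_clique lt_hi_n le_lo_hi.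
apply: (@process_bad_prob_gt0 _ _ _ (clique n y.-1 n.-1)).
- exact: clique_forward.
- by rewrite cI; lia.
- by rewrite cT; lia.
- by rewrite /is_tdg cI; apply/nandP; left; lia.
apply: addable_eq0 => e lt_e /(notin_clique lt_e)/orP[lt_e1 | ]; last by have := ltn_ord e.2; lia.
by apply/orP; right; rewrite cT terminals_clique // inE lt_e1; lia.
Qed.

Theorem mainTheorem9 (x y n : nat) :
  (1 <= x)%N -> (1 <= y)%N -> x <> y -> (maxn x y < n)%N ->
  (0 < process_bad_prob x y n)%R.
Proof.
move=> _ _ neq_xy; rewrite gtn_max => /andP[lt_xn lt_yn].
case: (ltngtP x y) => [lt_xy | lt_yx | //].
- exact: process_bad_prob_gt0_x_lt_y.
- exact: process_bad_prob_gt0_y_lt_x.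
Qed.
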